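(* Let $Q$ be a quiver and $i$ a mutable vertex such that $\mu_i(Q)$ is a fork (resp. an ice fork) with point of return $i$. Then $i$ is cycle-preserving for $Q$.
   Context: A quiver is a finite directed multigraph with no loops and no oriented 2-cycles, whose vertex set is partitioned into mutable and frozen vertices; arrows between two frozen vertices are ignored. $b_{ik}$ = number of arrows $i\to k$ minus number of arrows $k\to i$; $Q|_S$ is the induced subquiver on $S$; $[n]$ denotes the set of mutable vertices. Mutation $\mu_j$ at mutable $j$: for each path $i\to j\to k$ add $b_{ij}b_{jk}$ arrows $i\to k$, reverse all arrows at $j$, cancel 2-cycles. A 3-vertex quiver (or induced subquiver) is an oriented 3-cycle if it has at most one frozen vertex and its underlying directed graph is not acyclic. A mutable vertex $j$ is cycle-preserving for $Q$ if whenever $Q|_{\{i,j,k\}}$ is an oriented 3-cycle containing $j$, $\mu_j(Q)|_{\{i,j,k\}}$ is also an oriented 3-cycle. Abundant: at least 2 arrows between every pair of vertices at least one of which is mutable. $F^+(r)=\{i: r\to i\}$, $F^-(r)=\{j:j\to r\}$. A fork is an abundant non-acyclic quiver with at most one frozen vertex and a vertex $r$ (point of return) such that $b_{ij}>b_{ri}$ and $b_{ij}>b_{jr}$ for all $i\in F^+(r),j\in F^-(r)$, and the subquivers induced on $F^+(r)$ and $F^-(r)$ are acyclic. An ice fork with point of return $r$ is a quiver with mutable vertices $[n]$ and frozen vertices $u_1,\dots,u_m$ ($m\ge1$) such that each $Q|_{[n]\cup\{u_i\}}$ is a fork with point of return $r$. *)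

From mathcomp Require Import all_boot all_order all_algebra.
Set Implicit Arguments. Unset Strict Implicit. Unset Printing Implicit Defensive.
Import Order.TTheory GRing.Theory Num.Theory.
Local Open Scope ring_scope.

(* A quiver on a finite vertex type V is given by its set of mutable vertices
   [mut] (the other vertices are frozen) and its skew-symmetric exchange matrix
   [b], b x y = #arrows x->y - #arrows y->x.  Since there are no oriented
   2-cycles, the number of arrows x -> y is the positive part of b x y.
   Arrows between two frozen vertices are ignored (see [arrow]). *)
Definition skew_symmetric (V : finType) (b : V -> V -> int) := forall x y, b x y = - b y x.

Definition posp (z : int) : int := if 0 < z then z else 0.

Definition arrow (V : finType) (mut : {set V}) (b : V -> V -> int) (x y : V) : bool :=
  ((x \in mut) || (y \in mut)) && (0 < b x y).

(* mutation at j: for each path x -> j -> y add arrows x -> y, reverse the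
   arrows at j, cancel 2-cycles. *)
Definition mutate (V : finType) (j : V) (b : V -> V -> int) : V -> V -> int :=
  fun x y => if (x == j) || (y == j) then - b x y
             else b x y + posp (b x j) * posp (b j y) - posp (b y j) * posp (b j x).

Definition acyclic_on (V : finType) (mut : {set V}) (b : V -> V -> int) (S : {set V}) :=
  forall c : seq V, c != [::] -> all (fun x => x \in S) c -> ~~ cycle (arrow mut b) c.

Definition oriented3cycle (V : finType) (mut : {set V}) (b : V -> V -> int) (i j k : V) :=
  [/\ uniq [:: i; j; k],
      (#|[set i; j; k] :\: mut| <= 1)%N &
      ~ acyclic_on mut b [set i; j; k]].

Definition cycle_preserving (V : finType) (mut : {set V}) (b : V -> V -> int) (j : V) :=
  j \in mut /\
  forall i k : V, oriented3cycle mut b i j k -> oriented3cycle mut (mutate j b) i j k.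

Definition abundant_on (V : finType) (mut : {set V}) (b : V -> V -> int) (S : {set V}) :=
  forall x y, x \in S -> y \in S -> x != y -> (x \in mut) || (y \in mut) ->
    2 <= `|b x y|.

Definition Fplus (V : finType) (mut : {set V}) (b : V -> V -> int) (S : {set V}) (r : V) :=
  [set x in S | arrow mut b r x].
Definition Fminus (V : finType) (mut : {set V}) (b : V -> V -> int) (S : {set V}) (r : V) :=
  [set x in S | arrow mut b x r].

Definition fork_on (V : finType) (mut : {set V}) (b : V -> V -> int) (S : {set V}) (r : V) :=
  [/\ abundant_on mut b S,
      ~ acyclic_on mut b S,
      (#|S :\: mut| <= 1)%N &
      r \in S] /\
  [/\
      (forall x y, x \in Fplus mut b S r -> y \in Fminus mut b S r ->
          b r x < b x y /\ b y r < b x y),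
      acyclic_on mut b (Fplus mut b S r) &
      acyclic_on mut b (Fminus mut b S r)].

Definition is_fork (V : finType) (mut : {set V}) (b : V -> V -> int) (r : V) :=
  fork_on mut b [set: V] r.

Definition is_ice_fork (V : finType) (mut : {set V}) (b : V -> V -> int) (r : V) :=
  (exists u : V, u \notin mut) /\
  forall u : V, u \notin mut -> fork_on mut b (u |: mut) r.

From mathcomp Require Import all_boot all_order all_algebra.
Set Implicit Arguments. Unset Strict Implicit. Unset Printing Implicit Defensive.
Import Order.TTheory GRing.Theory Num.Theory.

(* Let Q|_{a,i,c} be an oriented 3-cycle, say a -> i -> c -> a (a cycle on three
   vertices of an antisymmetric relation must be a directed triangle).  Mutation
   at i reverses the arrows at i, so in mu_i(Q) we have i -> a and c -> i, i.e.
   a lies in F^+(i) and c in F^-(i).  The fork inequality then gives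
   b'(a, c) > b'(i, a) > 0, so a -> c in mu_i(Q), and i -> a -> c -> i is again
   an oriented 3-cycle. *)

Section RankedCycles.
Variables (T : eqType) (e : rel T).

Lemma ranked_cycle_free (P : {pred T}) (d : T -> nat) (c : seq T) :
  {in P &, forall u v, e u v -> (d u < d v)%N} ->
  c != [::] -> all P c -> ~~ cycle e c.
Proof.
move=> d_lt; case: c => [//|a c] _ Pac; apply/negP => /= cyc.
have Parc : all P (a :: rcons c a) by rewrite /= all_rcons andbA andbb.
have := order_path_min ltn_trans (homo_path_in d_lt Parc cyc).
by rewrite all_map all_rcons /= ltnn.
Qed.

End RankedCycles.

Section Triangle.
Variables (T : finType) (e : rel T) (p q r : T).
Hypothesis e_irr : forall u, ~~ e u u.
Hypothesis e_asym : forall u v, e u v -> ~~ e v u.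
Hypothesis no_pqr : ~~ [&& e p q, e q r & e r p].
Hypothesis no_prq : ~~ [&& e p r, e r q & e q p].

(* length of the longest e-path inside {p, q, r} ending at u *)
Let has_pred u := [|| e p u, e q u | e r u].
Let rank u : nat :=
  if [|| e p u && has_pred p, e q u && has_pred q | e r u && has_pred r] then 2
  else if has_pred u then 1 else 0.

Let rank_lt : {in [set p; q; r] &, forall u v, e u v -> (rank u < rank v)%N}.
Proof.
rewrite /rank /has_pred.
have [epp eqq err] := And3 (negbTE (e_irr p)) (negbTE (e_irr q)) (negbTE (e_irr r)).
have asym u v : ~~ (e u v && e v u) by case euv: (e u v) => //=; apply: e_asym.
move=> u v up vp; move: up vp no_pqr no_prq (asym p q) (asym q r) (asym p r).
rewrite !inE => /orP[/orP[]|]/eqP-> /orP[/orP[]|]/eqP->; rewrite ?epp ?eqq ?err //;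
by case: (e p q); case: (e q p); case: (e q r); case: (e r q); case: (e p r); case: (e r p).
Qed.

Lemma triangle_cycle_free (c : seq T) :
  c != [::] -> all (fun u => u \in [set p; q; r]) c -> ~~ cycle e c.
Proof. exact: ranked_cycle_free rank_lt. Qed.

End Triangle.

Local Open Scope ring_scope.

Section Arrows.
Variables (V : finType) (mut : {set V}) (b : V -> V -> int).
Hypothesis b_skew : skew_symmetric b.

Lemma arrow_irr (u : V) : ~~ arrow mut b u u.
Proof. by rewrite /arrow; have := b_skew u u; case: (b u u) => [[]|] //=; rewrite andbF. Qed.

Lemma arrow_asym (u v : V) : arrow mut b u v -> ~~ arrow mut b v u.
Proof. by case/andP=> _ buv; rewrite /arrow b_skew oppr_gt0 negb_and -leNgt ltW ?orbT. Qed.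

Lemma triangle_not_acyclic (x y z : V) :
  [&& arrow mut b x y, arrow mut b y z & arrow mut b z x] ->
  ~ acyclic_on mut b [set x; y; z].
Proof.
move=> xyz acyc.
have xyz_in : all (fun u => u \in [set x; y; z]) [:: x; y; z] by rewrite /= !inE !eqxx !orbT.
by case/negP: (acyc [:: x; y; z] isT xyz_in); rewrite /= andbT.
Qed.

Lemma not_acyclic_triangle (x y z : V) :
  ~ acyclic_on mut b [set x; y; z] ->
  [&& arrow mut b x y, arrow mut b y z & arrow mut b z x] ||
  [&& arrow mut b x z, arrow mut b z y & arrow mut b y x].
Proof.
move=> not_acyc; apply/negPn/negP => /norP[no_xyz no_xzy]; apply: not_acyc => c.
exact: (triangle_cycle_free arrow_irr (@arrow_asym) no_xyz no_xzy).
Qed.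

Lemma mutate_arrow_from (j x : V) :
  j \in mut -> arrow mut (mutate j b) j x = arrow mut b x j.
Proof. by move=> jmut; rewrite /arrow /mutate eqxx jmut orbC -b_skew. Qed.

Lemma mutate_arrow_to (j x : V) :
  j \in mut -> arrow mut (mutate j b) x j = arrow mut b j x.
Proof. by move=> jmut; rewrite /arrow /mutate eqxx orbT jmut orbT -b_skew. Qed.

End Arrows.

Lemma fork_on_return_arrow (V : finType) (mut : {set V}) (b : V -> V -> int)
    (S : {set V}) (r x y : V) :
  fork_on mut b S r -> x \in S -> y \in S ->
  arrow mut b r x -> arrow mut b y r -> (x \in mut) || (y \in mut) ->
  arrow mut b x y.
Proof.
move=> [_ [fork_ineq _ _]] xS yS rx yr xy_mut.
have [brx_lt _] : b r x < b x y /\ b y r < b x y.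
  by apply: fork_ineq; rewrite inE ?xS ?yS.
by rewrite /arrow xy_mut (lt_trans _ brx_lt) //; case/andP: rx.
Qed.

Lemma fork_or_ice_fork_cover (V : finType) (mut : {set V}) (b : V -> V -> int)
    (r x y : V) :
  r \in mut -> is_fork mut b r \/ is_ice_fork mut b r ->
  (x \in mut) || (y \in mut) ->
  exists2 S : {set V}, fork_on mut b S r & [&& x \in S, y \in S & r \in S].
Proof.
move=> rmut [fork|[[u ufrozen] ice]] xy_mut; first by exists setT; rewrite ?inE.
have [xmut|xfrozen] := boolP (x \in mut); have [ymut|yfrozen] := boolP (y \in mut).
- by exists (u |: mut); [exact: ice | rewrite !inE xmut ymut rmut !orbT].
- by exists (y |: mut); [exact: ice | rewrite !inE xmut eqxx rmut !orbT].
- by exists (x |: mut); [exact: ice | rewrite !inE ymut eqxx rmut !orbT].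
- by move: xy_mut; rewrite (negbTE xfrozen) (negbTE yfrozen).
Qed.

Lemma mutate_fork_keeps_triangle (V : finType) (mut : {set V})
    (b : V -> V -> int) (i x y : V) :
  skew_symmetric b -> i \in mut ->
  is_fork mut (mutate i b) i \/ is_ice_fork mut (mutate i b) i ->
  [&& arrow mut b x i, arrow mut b i y & arrow mut b y x] ->
  ~ acyclic_on mut (mutate i b) [set x; i; y].
Proof.
move=> b_skew imut fork /and3P[xi iy yx].
have xy_mut : (x \in mut) || (y \in mut) by rewrite orbC; case/andP: yx.
have [S forkS /and3P[xS yS iS]] := fork_or_ice_fork_cover imut fork xy_mut.
have ix' : arrow mut (mutate i b) i x by rewrite mutate_arrow_from.
have yi' : arrow mut (mutate i b) y i by rewrite mutate_arrow_to.
have xy' := fork_on_return_arrow forkS xS yS ix' yi' xy_mut.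
have -> : [set x; i; y] = [set i; x; y] by apply/setP=> v; rewrite !inE (orbC (v == x)).
by apply: triangle_not_acyclic; rewrite ix' xy' yi'.
Qed.

Theorem mainTheorem3 (V : finType) (mut : {set V}) (b : V -> V -> int) (i : V) :
  skew_symmetric b -> i \in mut ->
  (is_fork mut (mutate i b) i \/ is_ice_fork mut (mutate i b) i) ->
  cycle_preserving mut b i.
Proof.
move=> b_skew imut fork; split=> // a c [uniq_aic frozen_le1 not_acyc].
split=> //; case/orP: (not_acyclic_triangle b_skew not_acyc) => orient.
- exact: mutate_fork_keeps_triangle.
have -> : [set a; i; c] = [set c; i; a].
  by apply/setP=> v; rewrite !inE; case: (v == a); case: (v == c); rewrite ?orbT.
apply: mutate_fork_keeps_triangle => //.
by case/and3P: orient => -> -> ->.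
Qed.
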